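(* Let $S$ be an infinite set and $\mathcal{F}\subseteq 2^S$ a family closed under finite unions and finite intersections. Let $\mathbf{A}=(A_1,\dots,A_k)$ be a classification problem with $k\ge 2$. Then $\mathbf{A}\in\mathit{class}_k(\mathcal{F})$ if and only if $(A_i,A_j)\in\mathit{class}_2(\mathcal{F})$ for all $1\le i\ne j\le k$.
   Context: A classification problem is a vector $(A_1,\dots,A_k)$, $k\ge1$, of pairwise disjoint infinite subsets of $S$. For vectors $\mathbf{B}=(B_1,\dots,B_m)$ and $\mathbf{Q}=(Q_1,\dots,Q_k)$, $\mathbf{B}\leq\mathbf{Q}$ means $1\le m\le k$ and there is an injective $\sigma:\{1,\dots,m\}\to\{1,\dots,k\}$ with $B_i\subseteq Q_{\sigma(i)}$ for all $i$. An $\mathcal{F}$-partition is a vector $(Q_1,\dots,Q_k)$ of pairwise disjoint sets $Q_i\in\mathcal{F}$ with $Q_1\cup\dots\cup Q_k=S$. $\mathit{class}_k(\mathcal{F})$ is the set of classification problems $\mathbf{A}$ of length $k$ for which an $\mathcal{F}$-partition $\mathbf{Q}$ of length $k$ with $\mathbf{A}\leq\mathbf{Q}$ exists. *)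

(* Sets over a carrier type S are predicates S -> Prop.
   A vector (X_1,...,X_k) of subsets is represented as a function
   X : nat -> S -> Prop together with its length k; index i (0-based)
   ranges over i < k, so X i corresponds to X_{i+1}. *)
From Stdlib Require Import List.

Definition subset {S : Type} (A B : S -> Prop) : Prop := forall x, A x -> B x.

Definition infinite_set {S : Type} (A : S -> Prop) : Prop :=
  ~ exists l : list S, forall x, A x -> In x l.

Definition disjoint {S : Type} (A B : S -> Prop) : Prop :=
  forall x, A x -> B x -> False.

(* closure of F under finite (binary, hence all nonempty finite)
   unions and intersections *)
Definition closed_union_inter {S : Type} (F : (S -> Prop) -> Prop) : Prop :=
  (forall A B, F A -> F B -> F (fun x => A x \/ B x)) /\
  (forall A B, F A -> F B -> F (fun x => A x /\ B x)).

Definition classification_problem {S : Type} (k : nat) (A : nat -> S -> Prop) : Prop :=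
  1 <= k /\
  (forall i, i < k -> infinite_set (A i)) /\
  (forall i j, i < k -> j < k -> i <> j -> disjoint (A i) (A j)).

Definition vec_le {S : Type} (m : nat) (B : nat -> S -> Prop)
    (k : nat) (Q : nat -> S -> Prop) : Prop :=
  1 <= m /\ m <= k /\
  exists sigma : nat -> nat,
    (forall i, i < m -> sigma i < k) /\
    (forall i j, i < m -> j < m -> sigma i = sigma j -> i = j) /\
    (forall i, i < m -> subset (B i) (Q (sigma i))).

Definition F_partition {S : Type} (F : (S -> Prop) -> Prop) (k : nat)
    (Q : nat -> S -> Prop) : Prop :=
  (forall i, i < k -> F (Q i)) /\
  (forall i j, i < k -> j < k -> i <> j -> disjoint (Q i) (Q j)) /\
  (forall x : S, exists i, i < k /\ Q i x).

Definition class_k {S : Type} (F : (S -> Prop) -> Prop) (k : nat)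
    (A : nat -> S -> Prop) : Prop :=
  classification_problem k A /\
  exists Q : nat -> S -> Prop, F_partition F k Q /\ vec_le k A k Q.

Definition pair_vec {S : Type} (X Y : S -> Prop) : nat -> S -> Prop :=
  fun n => match n with 0 => X | _ => Y end.

(* A k-partition Q of S refining A yields, for every i <> j, the 2-partition
   (Q_l, union of the other cells) with l the cell containing A_i.
   Conversely, choose for every i < j a 2-partition (D_ij, D_ji) in F with
   A_i in D_ij and A_j in D_ji.  The cells  R_i = intersection over j <> i of
   D_ij  are pairwise disjoint members of F with A_i in R_i; keeping R_i for
   i < k-1 and replacing R_(k-1) by the complement of the other cells, which
   is the intersection over i < k-1 of the unions over j <> i of D_ji and
   hence again in F, gives the required k-partition. *)

From Stdlib Require Import List Lia Arith.
From Stdlib Require Import Classical ClassicalEpsilon.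
From Stdlib Require Import FunctionalExtensionality PropExtensionality.

Lemma set_ext {S : Type} (A B : S -> Prop) : (forall x, A x <-> B x) -> A = B.
Proof.
  intros H; apply functional_extensionality; intros x.
  apply propositional_extensionality; apply H.
Qed.

Definition bigcap {I S : Type} (l : list I) (f : I -> S -> Prop) : S -> Prop :=
  fun x => forall i, In i l -> f i x.

Definition bigcup {I S : Type} (l : list I) (f : I -> S -> Prop) : S -> Prop :=
  fun x => exists i, In i l /\ f i x.

Section FiniteOperations.

Variables (S I : Type) (F : (S -> Prop) -> Prop).
Hypothesis closedF : closed_union_inter F.

Lemma closed_bigcap (l : list I) (f : I -> S -> Prop) :
  l <> nil -> (forall i, In i l -> F (f i)) -> F (bigcap l f).
Proof.
  induction l as [|a l IH]; [congruence|]; intros _ Hf.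
  destruct l as [|b l].
  - replace (bigcap (a :: nil) f) with (f a); [apply Hf; left; auto|].
    apply set_ext; intros x; split.
    + intros Hx i [<-|[]]; exact Hx.
    + intros Hx; apply Hx; left; auto.
  - replace (bigcap (a :: b :: l) f) with (fun x => f a x /\ bigcap (b :: l) f x).
    + apply (proj2 closedF); [apply Hf; left; auto|].
      apply IH; [congruence|]; intros i Hi; apply Hf; right; exact Hi.
    + apply set_ext; intros x; split.
      * intros [Ha Hl] i [<-|Hi]; [exact Ha | apply Hl, Hi].
      * intros Hx; split; [apply Hx; left; auto|].
        intros i Hi; apply Hx; right; exact Hi.
Qed.

Lemma closed_bigcup (l : list I) (f : I -> S -> Prop) :
  l <> nil -> (forall i, In i l -> F (f i)) -> F (bigcup l f).
Proof.
  induction l as [|a l IH]; [congruence|]; intros _ Hf.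
  destruct l as [|b l].
  - replace (bigcup (a :: nil) f) with (f a); [apply Hf; left; auto|].
    apply set_ext; intros x; split.
    + intros Hx; exists a; split; [left|]; auto.
    + intros [i [[<-|[]] Hx]]; exact Hx.
  - replace (bigcup (a :: b :: l) f) with (fun x => f a x \/ bigcup (b :: l) f x).
    + apply (proj1 closedF); [apply Hf; left; auto|].
      apply IH; [congruence|]; intros i Hi; apply Hf; right; exact Hi.
    + apply set_ext; intros x; split.
      * intros [Ha|[i [Hi Hx]]]; [exists a | exists i]; split; simpl; auto.
      * intros [i [[<-|Hi] Hx]]; [left; exact Hx | right; exists i; auto].
Qed.

End FiniteOperations.

Definition others (k i : nat) : list nat :=
  filter (fun j => negb (j =? i)) (seq 0 k).

Lemma in_others k i j : In j (others k i) <-> j < k /\ j <> i.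
Proof.
  unfold others; rewrite filter_In, in_seq.
  destruct (Nat.eqb_spec j i); simpl; intuition lia.
Qed.

Lemma others_neq_nil k i : 2 <= k -> others k i <> nil.
Proof.
  intros Hk E.
  assert (H : In (if i =? 0 then 1 else 0) (others k i)).
  { apply in_others; destruct (Nat.eqb_spec i 0); lia. }
  rewrite E in H; destruct H.
Qed.

Lemma F_partition_pair_vec {S : Type} (F : (S -> Prop) -> Prop) (P C : S -> Prop) :
  F_partition F 2 (pair_vec P C) <->
  F P /\ F C /\ disjoint P C /\ (forall x, P x \/ C x).
Proof.
  split.
  - intros [HF [Hd Hc]]; split; [|split; [|split]].
    + apply (HF 0); lia.
    + apply (HF 1); lia.
    + apply (Hd 0 1); lia.
    + intros x; destruct (Hc x) as [[|[|n]] [Hn Hx]]; auto; lia.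
  - intros (HP & HC & Hd & Hc); split; [|split].
    + intros [|[|n]] Hn; simpl; auto; lia.
    + intros [|[|a]] [|[|b]] Ha Hb Hab; simpl; try lia; auto.
      intros x Hx1 Hx2; apply (Hd x); auto.
    + intros x; destruct (Hc x); [exists 0 | exists 1]; simpl; auto.
Qed.

Lemma F_partition_pair_vec_swap {S : Type} (F : (S -> Prop) -> Prop) (P C : S -> Prop) :
  F_partition F 2 (pair_vec P C) -> F_partition F 2 (pair_vec C P).
Proof.
  intros HPC; apply F_partition_pair_vec in HPC as (HP & HC & Hd & Hc).
  apply F_partition_pair_vec; split; [|split; [|split]]; auto.
  - intros x HCx HPx; apply (Hd x); auto.
  - intros x; destruct (Hc x); auto.
Qed.

Lemma vec_le_id {S : Type} (k : nat) (A Q : nat -> S -> Prop) :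
  1 <= k -> (forall i, i < k -> subset (A i) (Q i)) -> vec_le k A k Q.
Proof.
  intros Hk HAQ; split; [exact Hk|]; split; [lia|].
  exists (fun i => i); auto.
Qed.

Lemma classification_problem_pair_vec {S : Type} (k : nat) (A : nat -> S -> Prop) i j :
  classification_problem k A -> i < k -> j < k -> i <> j ->
  classification_problem 2 (pair_vec (A i) (A j)).
Proof.
  intros [_ [Hinf Hd]] Hi Hj Hij; split; [lia|]; split.
  - intros [|[|n]] Hn; simpl; auto; lia.
  - intros [|[|a]] [|[|b]] Ha Hb Hab; simpl; try lia; auto.
Qed.

Lemma class_k_pair_vec {S : Type} (F : (S -> Prop) -> Prop) (X Y P C : S -> Prop) :
  classification_problem 2 (pair_vec X Y) ->
  F_partition F 2 (pair_vec P C) -> subset X P -> subset Y C ->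
  class_k F 2 (pair_vec X Y).
Proof.
  intros HXY HPC HXP HYC; split; [exact HXY|].
  exists (pair_vec P C); split; [exact HPC|].
  apply vec_le_id; [lia|]; intros [|[|n]] Hn; simpl; auto; lia.
Qed.

Lemma class_k_pair_vec_inv {S : Type} (F : (S -> Prop) -> Prop) (X Y : S -> Prop) :
  class_k F 2 (pair_vec X Y) ->
  exists P C, F_partition F 2 (pair_vec P C) /\ subset X P /\ subset Y C.
Proof.
  intros [_ [Q [HQ [_ [_ [sigma [Hsk [Hsi Hsub]]]]]]]].
  assert (HQ01 : F_partition F 2 (pair_vec (Q 0) (Q 1))).
  { apply F_partition_pair_vec; destruct HQ as [HF [Hd Hc]].
    split; [|split; [|split]]; [apply HF; lia | apply HF; lia | apply Hd; lia|].
    intros x; destruct (Hc x) as [[|[|n]] [Hn Hx]]; auto; lia. }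
  assert (Hs01 : sigma 0 <> sigma 1) by (intros E; specialize (Hsi 0 1); lia).
  pose proof (Hsub 0 ltac:(lia)) as HX; pose proof (Hsub 1 ltac:(lia)) as HY.
  assert (H0 := Hsk 0 ltac:(lia)); assert (H1 := Hsk 1 ltac:(lia)).
  destruct (sigma 0) as [|[|]], (sigma 1) as [|[|]]; try lia.
  - exists (Q 0), (Q 1); auto.
  - exists (Q 1), (Q 0); split; [apply F_partition_pair_vec_swap|]; auto.
Qed.

Section Coarsening.

Variables (S : Type) (F : (S -> Prop) -> Prop) (k : nat) (Q : nat -> S -> Prop).
Hypotheses (closedF : closed_union_inter F) (Hk : 2 <= k) (HQ : F_partition F k Q).

Lemma F_partition_coarsen l :
  l < k -> F_partition F 2 (pair_vec (Q l) (bigcup (others k l) Q)).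
Proof.
  intros Hl; destruct HQ as [HF [Hd Hc]]; apply F_partition_pair_vec.
  split; [|split; [|split]].
  - apply HF, Hl.
  - apply closed_bigcup; [exact closedF | apply others_neq_nil, Hk|].
    intros j Hj; apply in_others in Hj; apply HF; lia.
  - intros x Hx [j [Hj Hjx]]; apply in_others in Hj.
    apply (Hd l j) with x; auto; lia.
  - intros x; destruct (Hc x) as [j [Hj Hjx]].
    destruct (Nat.eq_dec j l) as [->|Hjl]; [left; exact Hjx|].
    right; exists j; split; [apply in_others; lia | exact Hjx].
Qed.

End Coarsening.

Lemma class_k_pairs {S : Type} (F : (S -> Prop) -> Prop) k (A : nat -> S -> Prop) :
  closed_union_inter F -> 2 <= k -> class_k F k A ->
  forall i j, i < k -> j < k -> i <> j -> class_k F 2 (pair_vec (A i) (A j)).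
Proof.
  intros closedF Hk [HA [Q [HQ [_ [_ [sigma [Hsk [Hsi Hsub]]]]]]]] i j Hi Hj Hij.
  apply class_k_pair_vec with (Q (sigma i)) (bigcup (others k (sigma i)) Q).
  - apply classification_problem_pair_vec with k; auto.
  - apply F_partition_coarsen; auto.
  - apply Hsub, Hi.
  - intros x Hx; exists (sigma j); split; [apply in_others|apply Hsub; auto].
    split; [apply Hsk, Hj | intros E; apply Hij, Hsi; auto].
Qed.

(* Separators are chosen only for i < j; setting D j i to the other block
   makes every pair (D i j, D j i) complementary. *)
Lemma complementary_separators {S : Type} (F : (S -> Prop) -> Prop) k
    (A : nat -> S -> Prop) :
  (forall i j, i < k -> j < k -> i <> j ->
     exists P C, F_partition F 2 (pair_vec P C) /\ subset (A i) P /\ subset (A j) C) ->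
  exists D : nat -> nat -> S -> Prop, forall i j, i < k -> j < k -> i <> j ->
    F_partition F 2 (pair_vec (D i j) (D j i)) /\ subset (A i) (D i j).
Proof.
  intros Hsep.
  destruct (choice (fun ij PC => fst ij < snd ij < k ->
      F_partition F 2 (pair_vec (fst PC) (snd PC)) /\
      subset (A (fst ij)) (fst PC) /\ subset (A (snd ij)) (snd PC)))
    as [sep Hsep'].
  { intros [i j]; simpl. destruct (classic (i < j < k)) as [Hij|Hij].
    - destruct (Hsep i j) as [P [C HPC]]; try lia. exists (P, C); auto.
    - exists (A i, A j); intros; contradiction. }
  exists (fun i j => if i <? j then fst (sep (i, j)) else snd (sep (j, i))).
  intros i j Hi Hj Hij.
  destruct (Nat.ltb_spec i j), (Nat.ltb_spec j i); try lia.
  - destruct (Hsep' (i, j)) as [HPC [HiP _]]; simpl in *; [lia | auto].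
  - destruct (Hsep' (j, i)) as [HPC [_ HiC]]; simpl in *; [lia|].
    split; [apply F_partition_pair_vec_swap, HPC | exact HiC].
Qed.

Section Refinement.

Variables (S : Type) (F : (S -> Prop) -> Prop) (k : nat) (D : nat -> nat -> S -> Prop).
Hypotheses (closedF : closed_union_inter F) (Hk : 2 <= k).
Hypothesis HD : forall i j, i < k -> j < k -> i <> j ->
  F_partition F 2 (pair_vec (D i j) (D j i)).

Definition cell (i : nat) : S -> Prop := bigcap (others k i) (D i).

Definition residue : S -> Prop :=
  bigcap (seq 0 (k - 1)) (fun i => bigcup (others k i) (fun j => D j i)).

Definition refinement (i : nat) : S -> Prop :=
  if i <? k - 1 then cell i else residue.

Lemma separator_split i j : i < k -> j < k -> i <> j ->
  F (D i j) /\ F (D j i) /\ disjoint (D i j) (D j i) /\ (forall x, D i j x \/ D j i x).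
Proof. intros Hi Hj Hij; apply F_partition_pair_vec, HD; auto. Qed.

Lemma cell_in_F i : i < k -> F (cell i).
Proof.
  intros Hi; unfold cell.
  apply closed_bigcap; [exact closedF | apply others_neq_nil, Hk|].
  intros j Hj; apply in_others in Hj; apply separator_split; lia.
Qed.

Lemma residue_in_F : F residue.
Proof.
  unfold residue; apply closed_bigcap; [exact closedF | |].
  - destruct k as [|[|k']]; [lia | lia | discriminate].
  - intros i Hi; apply in_seq in Hi.
    apply closed_bigcup; [exact closedF | apply others_neq_nil, Hk|].
    intros j Hj; apply in_others in Hj; apply separator_split; lia.
Qed.

Lemma cell_disjoint i j x : i < k -> j < k -> i <> j -> cell i x -> cell j x -> False.
Proof.
  intros Hi Hj Hij Hix Hjx; apply (separator_split i j) with x; auto.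
  - apply Hix, in_others; auto.
  - apply Hjx, in_others; auto.
Qed.

Lemma cell_residue_disjoint i x : i < k - 1 -> cell i x -> residue x -> False.
Proof.
  intros Hi Hix Hres.
  destruct (Hres i) as [j [Hj Hji]]; [apply in_seq; lia|].
  apply in_others in Hj.
  apply (separator_split i j) with x; try lia; [apply Hix, in_others; lia | exact Hji].
Qed.

Lemma last_cell_sub_residue : subset (cell (k - 1)) residue.
Proof.
  intros x Hx i Hi; apply in_seq in Hi.
  exists (k - 1); split; [apply in_others; lia|].
  apply Hx, in_others; lia.
Qed.

(* Outside the cells i < k-1, each such i loses some separator to a j <> i. *)
Lemma cell_or_residue x : (exists i, i < k - 1 /\ cell i x) \/ residue x.
Proof.
  destruct (classic (exists i, i < k - 1 /\ cell i x)) as [Hcell|Hcell];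
    [left; exact Hcell|].
  right; intros i Hi; apply in_seq in Hi.
  assert (Hnot : ~ cell i x)
    by (intros Hix; apply Hcell; exists i; split; [lia | exact Hix]).
  apply not_all_ex_not in Hnot as [j Hj].
  apply imply_to_and in Hj as [Hj Hnj].
  exists j; split; [exact Hj|]; apply in_others in Hj.
  destruct (separator_split i j) as (_ & _ & _ & Hcover); try lia.
  destruct (Hcover x); [contradiction | assumption].
Qed.

Lemma refinement_F_partition : F_partition F k refinement.
Proof.
  unfold refinement; split; [|split].
  - intros i Hi; destruct (Nat.ltb_spec i (k - 1));
      [apply cell_in_F, Hi | apply residue_in_F].
  - intros i j Hi Hj Hij x.
    destruct (Nat.ltb_spec i (k - 1)), (Nat.ltb_spec j (k - 1)); try lia.
    + apply cell_disjoint; auto.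
    + apply cell_residue_disjoint; auto.
    + intros Hres Hjx; apply (cell_residue_disjoint j x); auto.
  - intros x; destruct (cell_or_residue x) as [[i [Hi Hix]]|Hres].
    + exists i; split; [lia|]; destruct (Nat.ltb_spec i (k - 1)); [exact Hix | lia].
    + exists (k - 1); split; [lia|].
      destruct (Nat.ltb_spec (k - 1) (k - 1)); [lia | exact Hres].
Qed.

Lemma cell_sub_refinement i : i < k -> subset (cell i) (refinement i).
Proof.
  intros Hi x Hx; unfold refinement; destruct (Nat.ltb_spec i (k - 1)); [exact Hx|].
  replace i with (k - 1) in Hx by lia; apply last_cell_sub_residue, Hx.
Qed.

End Refinement.

Lemma class_k_of_pairs {S : Type} (F : (S -> Prop) -> Prop) k (A : nat -> S -> Prop) :
  closed_union_inter F -> 2 <= k -> classification_problem k A ->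
  (forall i j, i < k -> j < k -> i <> j -> class_k F 2 (pair_vec (A i) (A j))) ->
  class_k F k A.
Proof.
  intros closedF Hk HA Hpairs.
  destruct (complementary_separators F k A) as [D HD].
  { intros i j Hi Hj Hij; apply class_k_pair_vec_inv, Hpairs; auto. }
  split; [exact HA|]; exists (refinement _ k D); split.
  - apply refinement_F_partition; auto; apply HD.
  - apply vec_le_id; [lia|]; intros i Hi x Hx.
    apply cell_sub_refinement; [exact Hk | exact Hi |].
    intros j Hj; apply in_others in Hj.
    apply HD; [lia.. | exact Hx].
Qed.

Theorem lemma2p3 (S : Type) (F : (S -> Prop) -> Prop) (k : nat)
    (A : nat -> S -> Prop) :
  infinite_set (fun _ : S => True) ->
  closed_union_inter F ->
  classification_problem k A ->
  2 <= k ->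
  (class_k F k A <->
   forall i j, i < k -> j < k -> i <> j ->
     class_k F 2 (pair_vec (A i) (A j))).
Proof.
  intros _ closedF HA Hk; split.
  - apply class_k_pairs; auto.
  - apply class_k_of_pairs; auto.
Qed.
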